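(* Let $G=([n],E)$ be any graph and $F$ any atomless distribution on $[0,\infty)$. For every price vector $\mathbf{p}=(p_1,\dots,p_n)$ with $p_i>0$ and every equilibrium $\mathbf{T}\in\mathcal{N}_{\mathbf{p}}$, $$\mathcal{R}(\mathbf{p},\mathbf{T})\le \mathbb{E}\Big[\max_{I\subseteq[n]\text{ independent in }G}\ \sum_{i\in I} v_i\Big],$$ where $v_1,\dots,v_n$ are i.i.d. with distribution $F$.
   Context: Public-goods pricing game: there are $n$ buyers, the vertices of an undirected graph $G=([n],E)$; $N(i)=\{j:(i,j)\in E\}$ (so $i\notin N(i)$). Buyer $i$ has private value $v_i$; the $v_i$ are i.i.d. with atomless cumulative distribution function $F$ on $[0,\infty)$, extended by $F(\infty)=1$. If $S$ is the set of buyers who purchase and $\pi_i$ is $i$'s payment, $i$'s utility is $v_i-\pi_i$ if $i\in S$ or $S\cap N(i)\neq\emptyset$, and $-\pi_i$ otherwise; a buyer pays $p_i$ iff he purchases. An equilibrium for the price vector $\mathbf{p}$ is a threshold vector $\mathbf{T}=(T_1,\dots,T_n)\in[0,\infty]^n$ (buyer $i$ purchases iff $v_i\ge T_i$) satisfying $T_i=p_i/\prod_{j\in N(i)}F(T_j)$ for all $i$ (convention $c/0=\infty$ for $c>0$). $\mathcal{N}_{\mathbf{p}}$ denotes the set of equilibria. The expected revenue is $\mathcal{R}(\mathbf{p},\mathbf{T})=\sum_i p_i(1-F(T_i))$. *)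

From HB Require Import structures.
From mathcomp Require Import all_boot all_order all_algebra.
From mathcomp Require Import all_classical all_reals all_analysis.
Set Implicit Arguments. Unset Strict Implicit. Unset Printing Implicit Defensive.
Import Order.TTheory GRing.Theory Num.Theory.
Local Open Scope classical_set_scope.
Local Open Scope ring_scope.

(* A simple undirected graph on [n] = 'I_n given by a symmetric irreflexive
   adjacency relation; N(i) = [set j | e i j]. *)
Definition simple_graph (n : nat) (e : rel 'I_n) : Prop :=
  (forall i j, e i j = e j i) /\ (forall i, ~~ e i i).

Definition independent (n : nat) (e : rel 'I_n) (I : {set 'I_n}) : bool :=
  [forall i in I, forall j in I, ~~ e i j].

Definition Fext (R : realType) (F : R -> R) (x : \bar R) : R :=
  match x with
  | EFin r => F r
  | +oo%E => 1
  | -oo%E => 0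
  end.

Definition is_equilibrium (R : realType) (n : nat) (e : rel 'I_n)
    (F : R -> R) (p : 'I_n -> R) (T : 'I_n -> \bar R) : Prop :=
  forall i, (0 <= T i)%E /\
    T i = (let q := \prod_(j | e i j) Fext F (T j) in
           if q == 0 then +oo%E else (p i / q)%:E).

Definition revenue (R : realType) (n : nat) (F : R -> R)
    (p : 'I_n -> R) (T : 'I_n -> \bar R) : R :=
  \sum_(i < n) p i * (1 - Fext F (T i)).

(* Mutual independence of the real random variables v_1, ..., v_n:
   product rule for every family of Borel sets (taking B_i = setT for
   unused indices gives the product rule for all subfamilies). *)
Definition mutually_independent d (T : measurableType d) (R : realType)
    (P : probability T R) (n : nat) (v : 'I_n -> T -> R) : Prop :=
  forall B : 'I_n -> set R, (forall i, measurable (B i)) ->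
    P (\bigcap_i (v i @^-1` B i)) = (\prod_(i < n) P (v i @^-1` B i))%E.

(* max over independent sets I of sum_{i in I} v_i (the empty set is
   independent, so 0 as neutral element is harmless). *)
Definition max_indep_value (R : realType) (n : nat) (e : rel 'I_n)
    (x : 'I_n -> R) : R :=
  \big[Num.max/0]_(I : {set 'I_n} | independent e I) \sum_(i in I) x i.

From HB Require Import structures.
From mathcomp Require Import all_boot all_order all_algebra.
From mathcomp Require Import all_classical all_reals all_analysis.
From mathcomp Require Import measurable_realfun.
From mathcomp Require Import ring.
Set Implicit Arguments. Unset Strict Implicit. Unset Printing Implicit Defensive.
Import Order.TTheory GRing.Theory Num.Theory.
Import numFieldNormedType.Exports.
Local Open Scope classical_set_scope.
Local Open Scope ring_scope.

(** Call buyer [i] a winner at the value profile [x] when [v_i] exceeds his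
    threshold while every neighbour stays at or below his own.  Winners form
    an independent set and each winner's value exceeds his threshold, so
    [sum_i T_i 1{i wins} <= max_I sum_(i in I) v_i] pointwise.  By
    independence, [P(i wins) = (1 - F(T_i)) prod_(j in N(i)) F(T_j)], and the
    equilibrium equation [T_i prod_(j in N(i)) F(T_j) = p_i] turns
    [T_i P(i wins)] into the revenue term [p_i (1 - F(T_i))]. *)

Section Winners.
Variables (R : realType) (n : nat) (e : rel 'I_n) (T : 'I_n -> \bar R).

Definition winner (x : 'I_n -> R) (i : 'I_n) : bool :=
  (T i < (x i)%:E)%E && [forall k, e i k ==> ((x k)%:E <= T k)%E].

Lemma independent_winners (x : 'I_n -> R) :
  independent e [set i | winner x i]%SET.
Proof.
apply/forallP => i; apply/implyP; rewrite inE => /andP[_ /forallP below_i].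
apply/forallP => j; apply/implyP; rewrite inE => /andP[above_j _].
apply/negP => eij; have := implyP (below_i j) eij.
by rewrite leNgt above_j.
Qed.

Lemma sum_winner_thresholds_le (x : 'I_n -> R) :
  (forall i, 0 <= T i)%E ->
  \sum_i fine (T i) * (winner x i)%:R <= max_indep_value e x.
Proof.
move=> T_ge0; set S := [set i | winner x i]%SET.
apply: (@le_trans _ _ (\sum_(i in S) x i)).
  rewrite [X in _ <= X]big_mkcond; apply: ler_sum => i _; rewrite inE.
  case/boolP: (winner x i) => [/andP[Tix _]|_]; last by rewrite mulr0.
  rewrite mulr1; move: Tix (T_ge0 i); case: (T i) => [t| |] //= /ltW.
  by rewrite lee_fin.
by rewrite /max_indep_value (bigD1 S) ?independent_winners //= le_max lexx.
Qed.

End Winners.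

Lemma measurable_max_indep_value (R : realType) (n : nat) (e : rel 'I_n)
    d (Omega : measurableType d) (x : 'I_n -> Omega -> R) :
  (forall i, measurable_fun setT (x i)) ->
  measurable_fun setT (fun w => max_indep_value e (x^~ w)).
Proof.
move=> mx; rewrite /max_indep_value.
elim: (index_enum _) => [|I s ih].
  under eq_fun => w do rewrite big_nil; exact: measurable_cst.
under eq_fun => w do rewrite big_cons.
case: (independent e I); last exact: ih.
apply: measurable_maxr => //.
under eq_fun => w do rewrite big_mkcond.
apply: measurable_sum => i.
by case: (i \in I); [exact: mx | exact: measurable_cst].
Qed.

Lemma measurable_EFin_le (R : realType) (a : \bar R) :
  measurable [set x : R | x%:E <= a]%E.
Proof.
have := EFin_measurable measurableT (emeasurable_itv `]-oo, a]).
by rewrite setTI set_itvNyc.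
Qed.

Section WinnerProbability.
Variables (R : realType) (n : nat) (e : rel 'I_n) (T : 'I_n -> \bar R).
Variables (d : measure_display) (Omega : measurableType d).
Variables (P : probability Omega R) (v : 'I_n -> {RV P >-> R}) (F : R -> R).
Hypothesis e_irr : forall i, ~~ e i i.
Hypothesis v_indep : mutually_independent P (fun i => (v i : Omega -> R)).
Hypothesis v_cdf : forall i x, P [set w | v i w <= x] = (F x)%:E.

Lemma probability_EFin_le i (a : \bar R) :
  P [set w | (v i w)%:E <= a]%E = (Fext F a)%:E.
Proof.
case: a => [r| |] /=.
- rewrite -(v_cdf i); apply: congr1.
  by apply/seteqP; split => w /=; rewrite lee_fin.
- rewrite (_ : mkset _ = setT) ?probability_setT //.
  by apply/seteqP; split => w //= _; rewrite leey.
- rewrite (_ : mkset _ = set0) ?measure0 //.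
  by apply/seteqP; split => w //=; rewrite leNye.
Qed.

Lemma probability_EFin_gt i (a : \bar R) :
  P [set w | a < (v i w)%:E]%E = (1 - Fext F a)%:E.
Proof.
have -> : [set w | a < (v i w)%:E]%E = ~` [set w | (v i w)%:E <= a]%E.
  by apply/seteqP; split => w /=; rewrite ltNge => /negP.
rewrite probability_setC ?probability_EFin_le //.
exact (measurable_funPTI (v i) (measurable_EFin_le a)).
Qed.

Definition winner_range (i k : 'I_n) : set R :=
  if k == i then [set x | T i < x%:E]%E
  else if e i k then [set x | x%:E <= T k]%E else setT.

Lemma measurable_winner_range i k : measurable (winner_range i k).
Proof.
rewrite /winner_range; case: eqP => _.
  rewrite (_ : mkset _ = ~` [set x | x%:E <= T i]%E).
    exact (measurableC (measurable_EFin_le _)).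
  by apply/seteqP; split => x /=; rewrite ltNge => /negP.
by case: (e i k); [exact (measurable_EFin_le _) | exact: measurableT].
Qed.

Lemma winner_event_bigcap i :
  [set w | winner e T (v^~ w) i] = \bigcap_k (v k @^-1` winner_range i k).
Proof.
apply/seteqP; split => w /=.
  move=> /andP[above /forallP below] k _ /=; rewrite /winner_range.
  case: eqP => [-> //|_]; case: ifP => // eik.
  exact: implyP (below k) eik.
move=> in_range; apply/andP; split.
  by have := in_range i Logic.I; rewrite /winner_range eqxx.
apply/forallP => k; apply/implyP => eik; have := in_range k Logic.I.
rewrite /winner_range eik; case: eqP => // ki.
by move: eik; rewrite ki (negbTE (e_irr i)).
Qed.

Lemma measurable_winner_event i : measurable [set w | winner e T (v^~ w) i].
Proof.
rewrite winner_event_bigcap.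
apply: fin_bigcap_measurable; first exact: finite_finset.
by move=> k _; exact (measurable_funPTI (v k) (measurable_winner_range i k)).
Qed.

Lemma probability_winner i :
  P [set w | winner e T (v^~ w) i] =
  ((1 - Fext F (T i)) * \prod_(k | e i k) Fext F (T k))%:E.
Proof.
rewrite winner_event_bigcap v_indep; last exact: measurable_winner_range.
rewrite (bigD1 i) //= {1}/winner_range eqxx probability_EFin_gt.
rewrite (eq_bigr (fun k => (if e i k then Fext F (T k) else 1)%:E)).
  rewrite prodEFin -EFinM; congr (_ * _)%:E.
  rewrite [RHS]big_mkcond [LHS]big_mkcond; apply: eq_bigr => k _.
  by case: eqP => [->|_] //=; rewrite (negbTE (e_irr i)).
move=> k ki; rewrite /winner_range (negbTE ki); case: (e i k).
  exact: probability_EFin_le.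
by rewrite preimage_setT probability_setT.
Qed.

Lemma winner_indicE i w :
  (winner e T (v^~ w) i)%:R = \1_[set w | winner e T (v^~ w) i] w :> R.
Proof. by rewrite indicE (mem_setE (fun w => winner e T (v^~ w) i)). Qed.

Lemma measurable_winner_payoff i :
  measurable_fun setT (fun w => fine (T i) * (winner e T (v^~ w) i)%:R).
Proof.
under eq_fun do rewrite winner_indicE.
exact/measurable_funM/measurable_indic/measurable_winner_event.
Qed.

Lemma expectation_winner_payoff : (forall i, 0 <= T i)%E ->
  (\int[P]_w (\sum_i fine (T i) * (winner e T (v^~ w) i)%:R)%:E =
   \sum_i (fine (T i) *
           ((1 - Fext F (T i)) * \prod_(k | e i k) Fext F (T k)))%:E)%E.
Proof.
move=> T_ge0; have fineT_ge0 i : 0 <= fine (T i) by exact: fine_ge0.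
under eq_integral do rewrite -sumEFin.
rewrite ge0_integral_sum //; last first.
- by move=> i w _; rewrite lee_fin mulr_ge0.
- by move=> i; exact/measurable_EFinP/measurable_winner_payoff.
apply: eq_bigr => i _.
under eq_integral do rewrite winner_indicE EFinM.
rewrite ge0_integralZl ?lee_fin //.
  rewrite integral_indic //; last exact: measurable_winner_event.
  by rewrite [_ `&` _]setIT EFinM; congr (_ * _)%E; exact: probability_winner.
exact/measurable_EFinP/measurable_indic/measurable_winner_event.
Qed.

End WinnerProbability.

Lemma equilibrium_revenue_term (R : realType) (n : nat) (e : rel 'I_n)
    (F : R -> R) (p : 'I_n -> R) (T : 'I_n -> \bar R) i :
  is_equilibrium e F p T ->
  p i * (1 - Fext F (T i)) =
  fine (T i) * ((1 - Fext F (T i)) * \prod_(k | e i k) Fext F (T k)).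
Proof.
case/(_ i) => /=; case: (T i) => [t| |] //= _.
  by case: eqP => // q_neq0 [->]; field; exact/eqP.
by rewrite subrr !mul0r mulr0.
Qed.

Theorem mainTheorem1 (R : realType) (n : nat) (e : rel 'I_n)
    (F : R -> R) (d : measure_display) (Omega : measurableType d)
    (P : probability Omega R) (v : 'I_n -> {RV P >-> R})
    (p : 'I_n -> R) (T : 'I_n -> \bar R) :
  simple_graph e ->
  continuous F -> (forall x, x < 0 -> F x = 0) ->
  mutually_independent P (fun i => (v i : Omega -> R)) ->
  (forall i x, P [set w | v i w <= x] = (F x)%:E) ->
  (forall i, 0 < p i) ->
  is_equilibrium e F p T ->
  ((revenue F p T)%:E <= 'E_P[fun w => max_indep_value e (fun i => v i w)])%E.
Proof.
move=> [_ e_irr] _ _ v_indep v_cdf _ eqT.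
have T_ge0 i : (0 <= T i)%E by case: (eqT i).
rewrite /revenue (eq_bigr _ (fun i _ => equilibrium_revenue_term i eqT)).
rewrite -sumEFin -(expectation_winner_payoff e_irr v_indep v_cdf T_ge0).
rewrite expectation.unlock.
apply: ge0_le_integral => //.
- move=> w _; rewrite lee_fin; apply: sumr_ge0 => i _.
  by rewrite mulr_ge0 ?fine_ge0.
- apply/measurable_EFinP; apply: measurable_sum => i.
  exact: measurable_winner_payoff.
- apply/measurable_EFinP/measurable_max_indep_value => i.
  exact: measurable_funPT.
- by move=> w _; rewrite lee_fin sum_winner_thresholds_le.
Qed.
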